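(* Let $C=\ln 4/(\ln 4-1)\approx 3.588$. Let $\delta$ be a positive integer and let $G$ be a graph on $n$ vertices with minimum degree at least $\delta$, where $n\ge (C-1)\delta^2+(3C-1)\delta+2$. Then either $G=K_{\delta,n-\delta}$ or $i(G)<i(K_{\delta,n-\delta})$.
   Context: Graphs are simple, loopless and finite. $i(G)$ denotes the total number of independent sets in $G$ (including the empty set). $K_{a,b}$ is the complete bipartite graph with $a$ vertices in one part and $b$ in the other. *)

From mathcomp Require Import all_boot.
From Stdlib Require Import Reals.
Set Implicit Arguments. Unset Strict Implicit. Unset Printing Implicit Defensive.

Definition simple_graph (T : finType) (e : rel T) : Prop :=
  symmetric e /\ irreflexive e.

Definition indep (T : finType) (e : rel T) (S : {set T}) : bool :=
  [forall x in S, forall y in S, ~~ e x y].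

Definition num_indep (T : finType) (e : rel T) : nat :=
  #|[set S : {set T} | indep e S]|.

Definition min_deg_ge (T : finType) (e : rel T) (d : nat) : Prop :=
  forall x : T, d <= #|[set y | e x y]|.

Definition Kab_rel (a b : nat) : rel ('I_a + 'I_b)%type :=
  fun u v => match u, v with
             | inl _, inr _ => true
             | inr _, inl _ => true
             | _, _ => false
             end.

Definition graph_iso (T T' : finType) (e : rel T) (e' : rel T') : Prop :=
  exists f : T -> T', bijective f /\ forall x y, e' (f x) (f y) = e x y.

Definition Cconst : R := (ln 4 / (ln 4 - 1))%R.

Definition n_large (n d : nat) : Prop :=
  (INR n >= (Cconst - 1) * INR d ^ 2 + (3 * Cconst - 1) * INR d + 2)%R.

(* Call x a witness if deg x = d and the non-neighbours of x are independent.
   Given a witness, every y outside N(x) has N(y) included in N(x) and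
   |N(y)| >= d = |N(x)|, so N(y) = N(x): G is K_{d,n-d} plus possibly some
   edges inside N(x). If there are such edges, every independent set lies on
   one side and N(x) itself is no longer independent, so i(G) <= 2^(n-d) + 2^d - 2.
   Without a witness, an independent (j+1)-set through x is x plus a j-subset
   of the non-neighbours H(x), where |H(x)| <= M = n - d - 1, and when
   |H(x)| = M the set H(x) contains an edge uv, whose two ends cannot both be
   chosen. Double counting over x gives M(M-1) i_{j+1} <= n C(M,j+1) (M-1+j),
   and summing over j yields i(G) <= 2^(n-d) as soon as n >= 4d + 5, which is
   all that the hypothesis on n is used for. *)

From mathcomp Require Import all_boot zify.
From Stdlib Require Import Reals Lra.
(* Reals re-exports Stdlib's [_ ^ _] on nat; restore ssrnat's [expn]. *)
Import ssrnat.

Set Implicit Arguments.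
Unset Strict Implicit.
Unset Printing Implicit Defensive.

Lemma n_large_ge n d : 0 < d -> n_large n d -> 4 * d + 5 <= n.
Proof.
move=> d_gt0; rewrite /n_large /Cconst => n_ge.
have ln4_gt1 : (1 < ln 4)%R.
  have := exp_le_3; rewrite -[X in (X < _)%R]ln_exp => e_le3.
  apply: ln_increasing; [exact: exp_pos | lra].
have ln4_lt2 : (ln 4 < 2)%R.
  have e_gt2 : (2 < exp 1)%R by have := exp_ineq1 1 ltac:(lra); lra.
  rewrite -[X in (_ < X)%R]ln_exp; apply: ln_increasing; first lra.
  have -> : (2 = 1 + 1)%R by lra.
  rewrite exp_plus; nra.
set L := ln 4 in ln4_gt1 ln4_lt2 n_ge.
have C_gt2 : (2 < L / (L - 1))%R.
  have C_mul : (L / (L - 1) * (L - 1) = L)%R by field; lra.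
  nra.
have d_ge1 : (1 <= INR d)%R by apply: (le_INR 1); apply/leP.
have : (INR (4 * d + 4) < INR n)%R by rewrite plus_INR mult_INR /=; nra.
by move/INR_lt/ltP; lia.
Qed.

Section SetsBySize.
Variable U : finType.

Lemma sum_card_size_eq (P : {set {set U}}) K :
  \sum_(k < K) #|[set S in P | #|S| == k]| = \sum_(S in P) (#|S| < K).
Proof.
have count_eq a : \sum_(k < K) (a == k :> nat) = (a < K).
  elim: K => [|K IH]; first by rewrite big_ord0.
  by rewrite big_ord_recr /= IH ltnS (leq_eqVlt a K); case: ltngtP.
transitivity (\sum_(k < K) \sum_(S in P) (#|S| == k)).
  apply: eq_bigr => k _; rewrite -sum1_card big_mkcond [in RHS]big_mkcond /=.
  by apply: eq_bigr => S _; rewrite !inE; case: (S \in P); case: (#|S| == k).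
by rewrite exchange_big /=; apply: eq_bigr => S _; exact: count_eq.
Qed.

Lemma sum_card_size_le (P : {set {set U}}) K :
  \sum_(k < K) #|[set S in P | #|S| == k]| <= #|P|.
Proof.
by rewrite sum_card_size_eq -sum1_card; apply: leq_sum => S _; case: (_ < _).
Qed.

Lemma sum_card_size (P : {set {set U}}) :
  \sum_(k < #|U|.+1) #|[set S in P | #|S| == k]| = #|P|.
Proof.
by rewrite sum_card_size_eq -sum1_card; apply: eq_bigr => S _; rewrite ltnS max_card.
Qed.

Lemma card_extensions_le (F : {set {set U}}) (Y B : {set U}) j :
  (forall S, S \in F -> [/\ Y \subset S, S :\: Y \subset B & #|S| = j + #|Y|]) ->
  #|F| <= 'C(#|B|, j).
Proof.
move=> FP; have setDK (S : {set U}) : Y \subset S -> Y :|: S :\: Y = S.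
  by move=> YS; rewrite -{2}(setID S Y) (setIidPr YS).
rewrite -(@card_in_imset _ _ (fun S => S :\: Y)); last first.
  by move=> S1 S2 /FP[Y1 _ _] /FP[Y2 _ _] E; rewrite -(setDK _ Y1) -(setDK _ Y2) E.
rewrite -cards_draws; apply: subset_leq_card; apply/subsetP => _ /imsetP[S /FP[YS SB cS] ->].
by rewrite inE SB cardsD (setIidPr YS) cS addnK eqxx.
Qed.

End SetsBySize.

Lemma sum_bin_le N K : \sum_(j < K) 'C(N, j) <= 2 ^ N.
Proof.
have -> : \sum_(j < K) 'C(N, j) =
          \sum_(k < K) #|[set S in powerset [set: 'I_N] | #|S| == k]|.
  apply: eq_bigr => j _; rewrite -[X in 'C(X, _)]card_ord -card_draws.
  by apply: eq_card => S; rewrite !inE subsetT.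
apply: leq_trans (sum_card_size_le _ _) _.
by rewrite card_powerset cardsT card_ord.
Qed.

(* The number of [j]-subsets of an [M]-set not containing both of two given points
   [u], [v]: those avoiding [v], plus those containing [v] but not [u]. *)
Definition bin_avoid_pair M j :=
  'C(M.-1, j) + (if j is j'.+1 then 'C(M.-2, j') else 0).

Lemma mul_bin_avoid_pair M j :
  0 < M -> M * M.-1 * bin_avoid_pair M j = j.+1 * 'C(M, j.+1) * (M.-1 + j).
Proof.
move=> M_gt0; rewrite /bin_avoid_pair.
have absorb : M * 'C(M.-1, j) = j.+1 * 'C(M, j.+1) by rewrite mul_bin_diag.
case: j absorb => [|j] absorb; first by rewrite addn0 mulnAC absorb; lia.
have absorb2 : M * M.-1 * 'C(M.-2, j) = j.+1 * (j.+2 * 'C(M, j.+2)).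
  by rewrite -mulnA mul_bin_diag mulnCA absorb.
by rewrite mulnDr absorb2 mulnAC absorb; lia.
Qed.

Lemma sum_bin_mul_le M K : 1 < M ->
  \sum_(j < K) 'C(M, j.+1) * (M.-1 + j) <= M.-2 * 2 ^ M + M * 2 ^ M.-1.
Proof.
move=> M_gt1.
have split_term j : 'C(M, j.+1) * (M.-1 + j) = M.-2 * 'C(M, j.+1) + M * 'C(M.-1, j).
  have -> : M.-1 + j = M.-2 + j.+1 by lia.
  by rewrite mulnDr mul_bin_diag mulnC [j.+1 * _]mulnC.
under eq_bigr => j _ do rewrite split_term.
rewrite big_split /= -!big_distrr /= leq_add ?leq_mul ?sum_bin_le //.
by apply: leq_trans (sum_bin_le M K.+1); rewrite big_ord_recl leq_addl.
Qed.

Section IndependentSets.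
Variables (T : finType) (e : rel T).

Lemma indepP (S : {set T}) :
  reflect (forall y z, y \in S -> z \in S -> ~~ e y z) (indep e S).
Proof.
apply: (iffP forallP) => [H y z yS zS | H y].
  by move: (H y); rewrite yS => /forallP/(_ z); rewrite zS.
by apply/implyP => yS; apply/forallP => z; apply/implyP => zS; apply: H.
Qed.

Lemma indepPn (S : {set T}) :
  reflect (exists u v, [/\ u \in S, v \in S & e u v]) (~~ indep e S).
Proof.
apply: (iffP idP) => [|[u [v [uS vS uv]]]]; last by apply/indepP => /(_ u v uS vS); rewrite uv.
case/forallPn=> u; rewrite negb_imply => /andP[uS /forallPn[v]].
by rewrite negb_imply negbK => /andP[vS uv]; exists u, v.
Qed.

Lemma indep_subset (A S : {set T}) : S \subset A -> indep e A -> indep e S.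
Proof.
move=> /subsetP SA /indepP indA; apply/indepP => y z yS zS.
by apply: indA; apply: SA.
Qed.

Lemma num_indep_ge_disjoint (A B : {set T}) :
  indep e A -> indep e B -> [disjoint A & B] ->
  2 ^ #|A| + 2 ^ #|B| - 1 <= num_indep e.
Proof.
move=> indA indB disjAB.
have sub : powerset A :|: powerset B \subset [set S | indep e S].
  apply/subsetP => S; rewrite !inE => /orP[] SA.
    exact: indep_subset indA.
  exact: indep_subset indB.
apply: leq_trans (subset_leq_card sub).
rewrite cardsU !card_powerset leq_sub2l //.
apply: (@leq_trans #|[set set0 : {set T}]|); last by rewrite cards1.
apply/subset_leq_card/subsetP => S; rewrite !inE => /andP[SA SB].
by have := disjointWr SB (disjointWl SA disjAB); rewrite -setI_eq0 setIid.
Qed.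

Lemma num_indep_le_split (A B : {set T}) :
  A != set0 -> ~~ indep e A ->
  (forall S, indep e S -> (S \subset A) || (S \subset B)) ->
  num_indep e <= 2 ^ #|B| + (2 ^ #|A| - 2).
Proof.
move=> A_neq0 nindA indAB.
have sub : [set S | indep e S] \subset powerset B :|: (powerset A :\: [set set0; A]).
  apply/subsetP => S; rewrite !inE => indS.
  case/orP: (indAB S indS) => [SA|->] //; rewrite SA andbT.
  case: (boolP (S \subset B)) => //= SB; apply/negP => /orP[]/eqP S_eq.
    by move: SB; rewrite S_eq sub0set.
  by move: nindA; rewrite -S_eq indS.
apply: leq_trans (subset_leq_card sub) _; apply: leq_trans (leq_card_setU _ _) _.
rewrite !card_powerset leq_add2l cardsD card_powerset (setIidPr _) ?cards2 1?eq_sym ?A_neq0 //.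
by apply/subsetP => S; rewrite !inE => /orP[]/eqP->; rewrite ?sub0set ?subxx.
Qed.

Lemma complete_bipartite_iso (A : {set T}) a :
  symmetric e -> #|A| = a -> indep e A -> indep e (~: A) ->
  (forall y z, y \notin A -> z \in A -> e y z) ->
  graph_iso e (@Kab_rel a (#|T| - a)).
Proof.
move=> e_sym cardA /indepP indA /indepP indC cross.
have cardC : #|~: A| = #|T| - a by rewrite cardsCs setCK; lia.
pose g (u : 'I_a + 'I_(#|T| - a)) : T :=
  match u with
  | inl i => enum_val (cast_ord (esym cardA) i)
  | inr i => enum_val (cast_ord (esym cardC) i)
  end.
have gA u : (g u \in A) = (if u is inl _ then true else false).
  case: u => i /=; first exact: enum_valP.
  by apply/negbTE; have := enum_valP (cast_ord (esym cardC) i); rewrite inE.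
have g_edge u v : e (g u) (g v) = @Kab_rel a (#|T| - a) u v.
  have := gA u; have := gA v.
  case: u v => [i|i] [j|j] /= gv gu; apply/idP.
  - by apply/negP/indA.
  - by rewrite e_sym cross ?gu ?gv.
  - by rewrite cross ?gu ?gv.
  - by apply/negP/indC; rewrite inE ?gu ?gv.
have g_inj : injective g.
  move=> u v guv; have side := gA u; rewrite guv gA in side.
  by case: u v guv side => [i|i] [j|j] //= /enum_val_inj/cast_ord_inj ->.
have [f gK fK] : bijective g.
  apply: (inj_card_bij g_inj); rewrite card_sum !card_ord -cardA.
  by rewrite subnKC ?max_card.
exists f; split; first by exists g.
by move=> x y; rewrite -g_edge !fK.
Qed.
End IndependentSets.

Lemma num_indep_Kab_ge a b :
  2 ^ a + 2 ^ b - 1 <= num_indep (@Kab_rel a b).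
Proof.
pose L := [set inl i | i : 'I_a] : {set 'I_a + 'I_b}.
pose R := [set inr i | i : 'I_b] : {set 'I_a + 'I_b}.
have cardL : #|L| = a by rewrite card_imset ?card_ord // => i j [].
have cardR : #|R| = b by rewrite card_imset ?card_ord // => i j [].
rewrite -[in 2 ^ a]cardL -[in 2 ^ b]cardR; apply: num_indep_ge_disjoint.
- by apply/indepP => _ _ /imsetP[i _ ->] /imsetP[j _ ->].
- by apply/indepP => _ _ /imsetP[i _ ->] /imsetP[j _ ->].
- by apply/pred0P => u /=; apply/negbTE/andP => -[/imsetP[i _ ->] /imsetP[j _]].
Qed.

Section Neighbourhoods.
Variables (T : finType) (e : rel T).
Hypotheses (e_sym : symmetric e) (e_irr : irreflexive e).

Definition nbr x := [set y | e x y].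
Definition nonnbr x := [set y | (y != x) && ~~ e x y].

Lemma setC_nbr x : ~: nbr x = x |: nonnbr x.
Proof.
by apply/setP => y; rewrite !inE; case: eqVneq => [->|]; rewrite ?e_irr.
Qed.

Lemma card_nonnbr x : #|nonnbr x| + #|nbr x| + 1 = #|T|.
Proof.
have := cardsC (nbr x); rewrite setC_nbr cardsU1 !inE eqxx /=; lia.
Qed.

Definition Kab_witness d x := (#|nbr x| == d) && indep e (nonnbr x).

Lemma nonnbr_adj_nbr x y z :
  min_deg_ge e #|nbr x| -> indep e (nonnbr x) ->
  y \notin nbr x -> z \in nbr x -> e y z.
Proof.
move=> min_deg /indepP indH; rewrite !inE => nxy xz.
have [-> //|yx] := eqVneq y x.
have sub : nbr y \subset nbr x.
  apply/subsetP => w; rewrite !inE => yw; apply: contraTT yw => nxw.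
  have [->|wx] := eqVneq w x; first by rewrite e_sym.
  by apply: indH; rewrite inE ?yx ?wx.
have : nbr y == nbr x by rewrite eqEcard sub min_deg.
by move/eqP/setP/(_ z); rewrite !inE xz.
Qed.

Lemma indep_setC_nbr x : indep e (nonnbr x) -> indep e (~: nbr x).
Proof.
move/indepP=> indH; apply/indepP => y z; rewrite setC_nbr.
have nbr_x w : w \in nonnbr x -> ~~ e x w by rewrite inE => /andP[].
case/setU1P=> [->|yH] /setU1P[->|zH]; rewrite ?e_irr ?nbr_x //.
  by rewrite e_sym nbr_x.
exact: indH.
Qed.

Lemma Kab_witness_cases d x :
  0 < d -> min_deg_ge e d -> Kab_witness d x ->
  graph_iso e (@Kab_rel d (#|T| - d)) \/
  num_indep e < num_indep (@Kab_rel d (#|T| - d)).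
Proof.
move=> d_gt0 min_deg /andP[/eqP deg_x indH].
rewrite -deg_x in min_deg *; set A := nbr x in min_deg indH *.
have cross y z := @nonnbr_adj_nbr x y z min_deg indH.
have indC := indep_setC_nbr indH.
have [indA | nindA] := boolP (indep e A); [left | right].
  by apply: complete_bipartite_iso cross.
have A_neq0 : A != set0 by rewrite -card_gt0 deg_x.
have indAC S : indep e S -> (S \subset A) || (S \subset ~: A).
  move=> /indepP indS; apply/orP.
  have [|/subsetPn[y yS]] := boolP (S \subset ~: A); first by right.
  rewrite inE negbK => yA; left; apply/subsetP => z zS; apply: contraT => zA.
  by have := indS z y zS yS; rewrite cross.
apply: leq_ltn_trans (num_indep_le_split A_neq0 nindA indAC) _.
apply: leq_trans (num_indep_Kab_ge _ _).
have : 1 < 2 ^ #|A| by rewrite -[1]/(2 ^ 0) ltn_exp2l // deg_x.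
rewrite [#|~: A|]cardsCs setCK; lia.
Qed.

Definition indep_through x k := [set S | [&& indep e S, #|S| == k & x \in S]].
Definition indep_of_size k := [set S | indep e S & #|S| == k].

Lemma indep_throughP x k S :
  S \in indep_through x k ->
  [/\ indep e S, #|S| = k, x \in S & forall z, z \in S -> z != x -> z \in nonnbr x].
Proof.
rewrite inE => /and3P[indS /eqP cardS xS]; split=> // z zS zx.
by rewrite inE zx; move/forallP: indS => /(_ x); rewrite xS => /forallP/(_ z); rewrite zS.
Qed.

Lemma sum_card_indep_through k :
  \sum_x #|indep_through x k| = #|indep_of_size k| * k.
Proof.
transitivity (\sum_x \sum_(S in indep_of_size k) (x \in S : nat)).
  apply: eq_bigr => x _; rewrite -sum1_card big_mkcond [RHS]big_mkcond /=.
  by apply: eq_bigr => S _; rewrite !inE; case: (indep e S); case: (_ == _); case: (x \in S).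
rewrite exchange_big /= -sum_nat_const; apply: eq_bigr => S; rewrite inE => /andP[_ /eqP <-].
by rewrite -sum1_card [in RHS]big_mkcond.
Qed.

Lemma card_indep_through_le x j : #|indep_through x j.+1| <= 'C(#|nonnbr x|, j).
Proof.
apply: (@card_extensions_le _ _ [set x]) => S /indep_throughP[_ cardS xS inH].
rewrite sub1set xS cards1 addn1; split=> //.
by apply/subsetP => z; rewrite in_setD in_set1 => /andP[zx zS]; apply: inH.
Qed.

Lemma card_indep_through_edge_le x u v j :
  u \in nonnbr x -> v \in nonnbr x -> e u v ->
  #|indep_through x j.+1| <= bin_avoid_pair #|nonnbr x| j.
Proof.
move=> uH vH uv.
have vx : v != x by move: vH; rewrite inE => /andP[].
have uvn : u != v by apply: contraTneq uv => ->; rewrite e_irr.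
rewrite -(setID (indep_through x j.+1) [set S : {set T} | v \in S]).
apply: leq_trans (leq_card_setU _ _) _.
rewrite addnC /bin_avoid_pair; apply: leq_add.
  have -> : #|nonnbr x|.-1 = #|nonnbr x :\ v| by rewrite (cardsD1 v) vH.
  apply: (@card_extensions_le _ _ [set x]) => S.
  rewrite in_setD [S \in [set _ | v \in _]]inE => /andP[vS /indep_throughP[_ cardS xS inH]].
  rewrite sub1set xS cards1 addn1; split=> //.
  apply/subsetP => z; rewrite in_setD in_set1 => /andP[zx zS].
  by rewrite in_setD1 inH // andbT; apply: contraNneq vS => <-.
case: j => [|j].
  rewrite leqn0 cards_eq0; apply/eqP/setP => S.
  rewrite in_set0 in_setI [S \in [set _ | v \in _]]inE.
  apply/negP => /andP[/indep_throughP[_ cardS xS _] vS].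
  have : [set x; v] \subset S by rewrite subUset !sub1set xS vS.
  by move/subset_leq_card; rewrite cardS cards2 eq_sym vx.
have -> : #|nonnbr x|.-2 = #|nonnbr x :\ v :\ u|.
  have := cardsD1 v (nonnbr x); have := cardsD1 u (nonnbr x :\ v).
  by rewrite vH in_setD1 uvn uH; lia.
apply: (@card_extensions_le _ _ [set x; v]) => S.
rewrite in_setI [S \in [set _ | v \in _]]inE => /andP[/indep_throughP[indS cardS xS inH] vS].
rewrite subUset !sub1set xS vS cards2 eq_sym vx cardS addn2; split=> //.
apply/subsetP => z; rewrite in_setD !in_set2 negb_or => /andP[/andP[zx zv] zS].
rewrite !in_setD1 inH // zv !andbT; apply: contraTneq uv => zu.
by move/indepP: indS; apply; rewrite -?zu.
Qed.

End Neighbourhoods.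

Section NoKabWitness.
Variables (T : finType) (e : rel T) (d : nat).
Hypotheses (e_irr : irreflexive e) (min_deg : min_deg_ge e d).
Hypothesis no_witness : forall x, ~~ Kab_witness e d x.
Hypothesis n_ge : 4 * d + 5 <= #|T|.
Local Notation M := (#|T| - d - 1).

Lemma card_indep_through_bound x j : #|indep_through e x j.+1| <= bin_avoid_pair M j.
Proof.
have deg_ge : d <= #|nbr e x| := min_deg x.
have card_T := card_nonnbr e_irr x.
have [deg_eq|deg_neq] := eqVneq #|nbr e x| d.
  have /indepPn[u [v [uH vH uv]]] : ~~ indep e (nonnbr e x).
    by have := no_witness x; rewrite /Kab_witness deg_eq eqxx.
  have -> : M = #|nonnbr e x| by lia.
  exact: card_indep_through_edge_le uH vH uv.
apply: leq_trans (card_indep_through_le e x j) (leq_trans _ (leq_addr _ _)).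
apply: leq_bin2l; move: deg_ge; rewrite leq_eqVlt eq_sym (negbTE deg_neq) /=.
set n := #|T| in card_T *; lia.
Qed.

Lemma card_indep_of_size_bound j :
  M * M.-1 * #|indep_of_size e j.+1| <= #|T| * ('C(M, j.+1) * (M.-1 + j)).
Proof.
rewrite -(@leq_pmul2l j.+1) // mulnCA [j.+1 * _]mulnC -sum_card_indep_through.
rewrite big_distrr /=.
apply: (@leq_trans (\sum_(x : T) j.+1 * 'C(M, j.+1) * (M.-1 + j))).
  apply: leq_sum => x _; rewrite -mul_bin_avoid_pair; last by lia.
  by rewrite leq_mul2l card_indep_through_bound orbT.
by rewrite sum_nat_const -!mulnA mulnCA.
Qed.

Lemma num_indep_le_no_witness : num_indep e <= 2 ^ (#|T| - d).
Proof.
have M_gt1 : 1 < M by lia.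
have size0 : #|[set S in [set S | indep e S] | #|S| == 0]| <= 1.
  rewrite -(cards1 (@set0 T)); apply/subset_leq_card/subsetP => S.
  by rewrite !inE cards_eq0 => /andP[_ ->].
have sizeS j : [set S in [set S | indep e S] | #|S| == j.+1] = indep_of_size e j.+1.
  by apply/setP => S; rewrite !inE.
have total : M * M.-1 * num_indep e <=
             M * M.-1 + #|T| * (M.-2 * 2 ^ M + M * 2 ^ M.-1).
  rewrite /num_indep -sum_card_size big_ord_recl mulnDr leq_add //.
    by rewrite -[X in _ <= X]muln1 leq_mul2l size0 orbT.
  rewrite big_distrr /=; under eq_bigr => j _ do rewrite /bump add1n sizeS.
  apply: (@leq_trans (\sum_(j < #|T|) #|T| * ('C(M, j.+1) * (M.-1 + j)))).
    by apply: leq_sum => j _; exact: card_indep_of_size_bound.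
  by rewrite -big_distrr leq_mul2l sum_bin_mul_le ?orbT.
have pow_M : 2 ^ M = 2 * 2 ^ M.-1 by rewrite -expnS; congr (2 ^ _); lia.
have pow_n : 2 ^ (#|T| - d) = 4 * 2 ^ M.-1 by rewrite -(expnD 2 2); congr (2 ^ _); lia.
have pow_gt0 := expn_gt0 2 M.-1.
move: total; rewrite pow_n pow_M; set P := 2 ^ M.-1; set I := num_indep e => total.
have n_small : #|T| * (2 * M.-2 + M) < 4 * (M * M.-1) by nia.
nia.
Qed.

End NoKabWitness.

Theorem mainTheorem3 (T : finType) (e : rel T) (d : nat) :
  simple_graph e -> 0 < d -> min_deg_ge e d -> n_large #|T| d ->
  graph_iso e (@Kab_rel d (#|T| - d)) \/
  num_indep e < num_indep (@Kab_rel d (#|T| - d)).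
Proof.
move=> [e_sym e_irr] d_gt0 min_deg /(n_large_ge d_gt0) n_ge.
have [x witness | no_witness] := pickP (Kab_witness e d).
  exact: Kab_witness_cases witness.
right; apply: leq_ltn_trans (num_indep_le_no_witness e_irr min_deg _ n_ge) _.
  by move=> x; rewrite no_witness.
apply: leq_trans (num_indep_Kab_ge _ _).
have : 1 < 2 ^ d by rewrite -[1]/(2 ^ 0) ltn_exp2l.
lia.
Qed.
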